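(* Let $G\subsetneq\mathbb{R}^n$ be a domain and let $\eta:[0,\infty)\to[0,\infty)$ be a strictly increasing homeomorphism with $\eta(0)=0$. If the identity mapping $\mathrm{id}:(G,j_G)\to(G,k_G)$ is $\eta$-quasisymmetric, then $G$ is $\varphi$-uniform for some $\varphi$ depending only on $\eta$.
   Context: For $x\in G$, $\delta(x)$ is the Euclidean distance from $x$ to $\partial G$. The distance ratio metric is $j_G(x,y)=\log\Big(1+\frac{|x-y|}{\min\{\delta(x),\delta(y)\}}\Big)$ and the quasihyperbolic metric is $k_G(x,y)=\inf_\gamma\int_\gamma\frac{|dz|}{\delta(z)}$, the infimum over rectifiable paths joining $x,y$ in $G$. A map $f:(X_1,d_1)\to(X_2,d_2)$ between metric spaces is $\eta$-quasisymmetric if $\frac{d_2(f(x),f(y))}{d_2(f(y),f(z))}\le\eta\big(\frac{d_1(x,y)}{d_1(y,z)}\big)$ for all $x,y,z\in X_1$ with $x\ne y\ne z$. Given a strictly increasing homeomorphism $\varphi:[0,\infty)\to[0,\infty)$ with $\varphi(0)=0$, $G$ is $\varphi$-uniform if $k_G(x,y)\le\varphi\big(\frac{|x-y|}{\min\{\delta(x),\delta(y)\}}\big)$ for all $x,y\in G$. *)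

(* R : realType, R^n = 'rV[R]_n with the Euclidean norm. *)
From HB Require Import structures.
From mathcomp Require Import all_boot all_order all_algebra.
From mathcomp Require Import all_classical all_reals all_analysis.
Set Implicit Arguments. Unset Strict Implicit. Unset Printing Implicit Defensive.
Import Order.TTheory GRing.Theory Num.Theory.
Import numFieldNormedType.Exports.
Local Open Scope classical_set_scope.
Local Open Scope ring_scope.

Section Defs.
Variable R : realType.

Definition enorm (n : nat) (x : 'rV[R]_n) : R :=
  Num.sqrt (\sum_(i < n) (x ord0 i) ^+ 2).

Definition domain (n : nat) (G : set 'rV[R]_n) : Prop :=
  open G /\ connected G /\ G !=set0.

Definition bdry (n : nat) (G : set 'rV[R]_n) : set 'rV[R]_n :=
  closure G `\` interior G.

Definition delta (n : nat) (G : set 'rV[R]_n) (x : 'rV[R]_n) : R :=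
  inf [set enorm (x - z) | z in bdry G].

Definition jG (n : nat) (G : set 'rV[R]_n) (x y : 'rV[R]_n) : R :=
  ln (1 + enorm (x - y) / Num.min (delta G x) (delta G y)).

Definition partition (a b : R) (m : nat) (t : nat -> R) : Prop :=
  t 0%N = a /\ t m = b /\ (forall i, (i < m)%N -> t i <= t i.+1).

Definition chord_sums (n : nat) (g : R -> 'rV[R]_n) (a b : R) : set R :=
  [set r | exists m t, partition a b m t /\
     r = \sum_(i < m) enorm (g (t i.+1) - g (t i))].

Definition plen (n : nat) (g : R -> 'rV[R]_n) (a b : R) : R :=
  sup (chord_sums g a b).

Definition path_in (n : nat) (G : set 'rV[R]_n) (x y : 'rV[R]_n)
  (g : R -> 'rV[R]_n) : Prop :=
  {within [set s | 0 <= s <= 1], continuous g} /\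
  (forall s, 0 <= s <= 1 -> G (g s)) /\ g 0 = x /\ g 1 = y.

Definition rectifiable (n : nat) (g : R -> 'rV[R]_n) : Prop :=
  has_ubound (chord_sums g 0 1).

(* quasihyperbolic length  int_g |dz| / delta(z), as the (Riemann-Stieltjes)
   integral of 1/delta(g(s)) with respect to arc length: supremum of the
   lower Darboux-Stieltjes sums *)
Definition qhlen (n : nat) (G : set 'rV[R]_n) (g : R -> 'rV[R]_n) : R :=
  sup [set r | exists m t, partition 0 1 m t /\
     r = \sum_(i < m) (inf [set (delta G (g s))^-1 | s in
                              [set s | t i <= s <= t i.+1]]
                       * plen g (t i) (t i.+1))].

Definition kG (n : nat) (G : set 'rV[R]_n) (x y : 'rV[R]_n) : R :=
  inf [set r | exists g, path_in G x y g /\ rectifiable g /\ r = qhlen G g].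

Definition homeo0 (f : R -> R) : Prop :=
  f 0 = 0 /\
  (forall s t, 0 <= s -> s < t -> f s < f t) /\
  {within [set s | 0 <= s], continuous f} /\
  (forall y, 0 <= y -> exists2 s, 0 <= s & f s = y).

Definition quasisymmetric (T1 T2 : Type) (A : set T1) (d1 : T1 -> T1 -> R)
  (d2 : T2 -> T2 -> R) (f : T1 -> T2) (eta : R -> R) : Prop :=
  forall x y z, A x -> A y -> A z -> x <> y -> y <> z ->
    d2 (f x) (f y) / d2 (f y) (f z) <= eta (d1 x y / d1 y z).

Definition phi_uniform (n : nat) (G : set 'rV[R]_n) (phi : R -> R) : Prop :=
  forall x y, G x -> G y ->
    kG G x y <= phi (enorm (x - y) / Num.min (delta G x) (delta G y)).

End Defs.

From Pilot Require Import Defs.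
From HB Require Import structures.
From mathcomp Require Import all_boot all_order all_algebra.
From mathcomp Require Import all_classical all_reals all_analysis.
From mathcomp Require Import ring lra zify.
Import Order.TTheory GRing.Theory Num.Theory.
Import numFieldNormedType.Exports.
Local Open Scope classical_set_scope.
Local Open Scope ring_scope.
Set Implicit Arguments. Unset Strict Implicit. Unset Printing Implicit Defensive.

(* Fix y and a point z with |z - y| = delta(y)/2.  On the segment [y, z] the
   distance to the boundary stays >= delta(y)/2, so k(y,z) <= 1; along any path
   from y to z, delta grows by at most the length travelled, so k(y,z) >= 1/3;
   and j(y,z) >= ln(3/2).  Quasisymmetry on the triple (x, y, z) then gives
   k(x,y) <= eta(j(x,y) / j(y,z)) k(y,z) <= eta(j(x,y) / ln(3/2)), and since
   j(x,y) = ln(1 + |x-y| / min(delta(x), delta(y))) one may take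
   phi(r) = eta(ln(1+r) / ln(3/2)). *)

Section EuclideanNorm.
Variables (R : realType) (n : nat).
Implicit Types u v w : 'rV[R]_n.

Lemma sum_coord_sqr_ge0 v : 0 <= \sum_(i < n) (v ord0 i) ^+ 2.
Proof. by apply: sumr_ge0 => i _; exact: sqr_ge0. Qed.

Lemma coord_sqr_le_sum v i : (v ord0 i) ^+ 2 <= \sum_(j < n) (v ord0 j) ^+ 2.
Proof. by rewrite (bigD1 i) //= lerDl; apply: sumr_ge0 => j _; exact: sqr_ge0. Qed.

Lemma enorm_ge0 v : 0 <= enorm v.
Proof. exact: sqrtr_ge0. Qed.

Lemma enorm_sqr v : enorm v ^+ 2 = \sum_(i < n) (v ord0 i) ^+ 2.
Proof. by rewrite sqr_sqrtr // sum_coord_sqr_ge0. Qed.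

Lemma enormZ (c : R) v : enorm (c *: v) = `|c| * enorm v.
Proof.
rewrite /enorm (eq_bigr (fun i => c ^+ 2 * (v ord0 i) ^+ 2)); last first.
  by move=> i _; rewrite mxE exprMn.
by rewrite -mulr_sumr sqrtrM ?sqr_ge0 // sqrtr_sqr.
Qed.

Lemma enorm0 : enorm (0 : 'rV[R]_n) = 0.
Proof. by rewrite -(scale0r 0) enormZ normr0 mul0r. Qed.

Lemma enorm_distC u v : enorm (u - v) = enorm (v - u).
Proof. by rewrite -opprB -scaleN1r enormZ normrN normr1 mul1r. Qed.

Lemma coord_le_enorm v i : `|v ord0 i| <= enorm v.
Proof. by rewrite -(sqrtr_sqr (v ord0 i)) ler_sqrt ?sum_coord_sqr_ge0 ?coord_sqr_le_sum. Qed.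

Lemma mx_norm_le_enorm v : `|v| <= enorm v.
Proof.
have [->|/mx_norm_neq0 [[i j] vij]] := eqVneq `|v| 0; first exact: enorm_ge0.
by rewrite [leLHS]vij (ord1 i); exact: coord_le_enorm.
Qed.

Lemma enorm_le_mx_norm v : enorm v <= n%:R * `|v|.
Proof.
have coord_le i : `|v ord0 i| <= `|v|.
  by rewrite [leRHS]/Num.norm /= mx_normrE; apply/bigmax_geP; right; exists (ord0, i).
rewrite /enorm -(@ger0_norm _ (n%:R * `|v|)) ?mulr_ge0 // -sqrtr_sqr.
rewrite ler_sqrt ?sqr_ge0 // (@le_trans _ _ (\sum_(i < n) `|v|^+2)) //.
  apply: ler_sum => i _; rewrite -real_normK ?num_real //.
  by rewrite lerXn2r ?nnegrE // coord_le.
rewrite sumr_const card_ord -[_ *+ n]mulr_natr exprMn [leRHS]mulrC.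
apply: ler_wpM2l; first exact: sqr_ge0.
by rewrite -natrX ler_nat; nia.
Qed.

Lemma enorm_eq0_coord v i : enorm v = 0 -> v ord0 i = 0.
Proof. by move=> v0; apply/normr0_eq0/le_anti; rewrite normr_ge0 andbT -v0 coord_le_enorm. Qed.

Lemma sum_coord_mul_le_enorm u v :
  \sum_(i < n) u ord0 i * v ord0 i <= enorm u * enorm v.
Proof.
set a := enorm u; set b := enorm v; set D := \sum_(i < n) _.
have [a0|a0] := eqVneq a 0.
  by rewrite a0 mul0r /D big1 // => i _; rewrite (enorm_eq0_coord _ a0) mul0r.
have [b0|b0] := eqVneq b 0.
  by rewrite b0 mulr0 /D big1 // => i _; rewrite (enorm_eq0_coord _ b0) mulr0.
have ab0 : 0 < a * b by rewrite mulr_gt0 // lt0r ?a0 ?b0 enorm_ge0.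
have : 0 <= \sum_(i < n) (b * u ord0 i - a * v ord0 i) ^+ 2.
  by apply: sumr_ge0 => i _; exact: sqr_ge0.
rewrite (eq_bigr (fun i => b ^+ 2 * (u ord0 i) ^+ 2 + a ^+ 2 * (v ord0 i) ^+ 2
    - 2 * (a * b) * (u ord0 i * v ord0 i))); last by move=> i _; ring.
rewrite sumrB big_split /= -!mulr_sumr -!enorm_sqr -/a -/b -/D => h.
by rewrite -(ler_pM2l ab0); nra.
Qed.

Lemma enormD u v : enorm (u + v) <= enorm u + enorm v.
Proof.
have uv0 : 0 <= enorm u + enorm v by rewrite addr_ge0 ?enorm_ge0.
rewrite -(ger0_norm uv0) -sqrtr_sqr ler_sqrt ?sqr_ge0 //.
rewrite (eq_bigr (fun i => (u ord0 i) ^+ 2 + (v ord0 i) ^+ 2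
    + 2 * (u ord0 i * v ord0 i))); last by move=> i _; rewrite mxE; ring.
rewrite !big_split /= -mulr_sumr -!enorm_sqr.
have := sum_coord_mul_le_enorm u v; have := enorm_ge0 u; have := enorm_ge0 v.
nra.
Qed.

Lemma enorm_distD u v w : enorm (u - w) <= enorm (u - v) + enorm (v - w).
Proof. by apply: le_trans (enormD _ _); rewrite addrA subrK. Qed.

Lemma exists_enorm_dist (v y : 'rV[R]_n) (r : R) : 0 < enorm v -> 0 <= r ->
  exists z, enorm (z - y) = r.
Proof.
move=> v0 r0; exists (y + (r / enorm v) *: v).
by rewrite addrC addKr enormZ ger0_norm ?divr_ge0 ?enorm_ge0 // divfK ?gt_eqF.
Qed.

End EuclideanNorm.

Section SupInf.
Variable R : realType.
Implicit Types E : set R.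

Lemma sup_ge0 E : (forall x, E x -> 0 <= x) -> 0 <= sup E.
Proof.
move=> E_ge0; have [supE|] := pselect (has_sup E); last by move/sup_out ->.
have [[x Ex] _] := supE.
by apply: le_trans (E_ge0 _ Ex) _; exact: sup_upper_bound.
Qed.

Lemma inf_ge0 E : (forall x, E x -> 0 <= x) -> 0 <= inf E.
Proof.
move=> E_ge0; have [E0|/nonemptyPn ->] := pselect (E !=set0); last by rewrite inf0.
exact: lb_le_inf.
Qed.

Lemma inf_le_ge0 E x : (forall y, E y -> 0 <= y) -> E x -> inf E <= x.
Proof. by move=> E_ge0; apply: ge_inf; exists 0. Qed.

End SupInf.

Section DistanceToBoundary.
Variables (R : realType) (n : nat) (G : set 'rV[R]_n).
Implicit Types x y w b : 'rV[R]_n.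

Lemma delta_ge0 x : 0 <= delta G x.
Proof. by apply: inf_ge0 => _ [z _ <-]; exact: enorm_ge0. Qed.

Lemma delta_le_dist x b : bdry G b -> delta G x <= enorm (x - b).
Proof. by move=> Gb; apply: inf_le_ge0 => [_ [z _ <-]|]; [exact: enorm_ge0|exists b]. Qed.

Lemma delta_bdry0 x : bdry G = set0 -> delta G x = 0.
Proof. by move=> B0; rewrite /delta B0 image_set0 inf0. Qed.

Lemma delta_lipschitz w y : delta G w <= delta G y + enorm (w - y).
Proof.
have [[b Gb]|/nonemptyPn B0] := pselect (bdry G !=set0); last first.
  by rewrite !delta_bdry0 // add0r enorm_ge0.
rewrite -lerBlDr; apply: lb_le_inf; first by exists (enorm (y - b)), b.
move=> _ [c Gc <-]; rewrite lerBlDr addrC.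
exact: le_trans (delta_le_dist w Gc) (enorm_distD _ y _).
Qed.

Lemma delta_continuous : continuous (delta G).
Proof.
move=> y; apply/(@cvgrPdist_lt _ _ _ (nbhs y)) => e e0; apply/nbhs_ballP.
exists (e / n.+1%:R) => [|w /= yw]; first by rewrite /= divr_gt0.
have {}yw : `|y - w| < e / n.+1%:R by move: yw; rewrite -ball_normE.
have lip : `|delta G y - delta G w| <= enorm (y - w).
  rewrite ler_norml; have := delta_lipschitz y w; have := delta_lipschitz w y.
  rewrite (enorm_distC w); lra.
apply: le_lt_trans lip (le_lt_trans (enorm_le_mx_norm _) _).
rewrite ltr_pdivlMr ?ltr0n // in yw.
apply: le_lt_trans yw; rewrite mulrC.
by apply: ler_wpM2l; rewrite ?ler_nat.
Qed.

Lemma bdry_notin b : open G -> bdry G b -> ~ G b.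
Proof. by move=> oG [_ nGb] Gb; apply: nGb; move: oG; rewrite openE => /(_ _ Gb). Qed.

Lemma delta_gt0 y : open G -> G y -> bdry G !=set0 -> 0 < delta G y.
Proof.
move=> oG Gy [b Gb]; have /nbhs_ballP [e e0 yeG] : nbhs y G by rewrite nbhsE; exists G.
apply: lt_le_trans e0 _; apply: lb_le_inf; first by exists (enorm (y - b)), b.
move=> _ [c Gc <-]; rewrite leNgt; apply/negP => ce; apply: (bdry_notin oG Gc).
by apply: yeG; rewrite -ball_normE /= (le_lt_trans (mx_norm_le_enorm _) ce).
Qed.

Lemma jG_ge0 x y : 0 <= jG G x y.
Proof. by rewrite ln_ge0 // lerDl divr_ge0 ?enorm_ge0 // le_min !delta_ge0. Qed.

Lemma ln_ratio_le_jG x y : 0 < delta G x -> 0 < delta G y ->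
  ln (1 + enorm (x - y) / delta G x) <= jG G x y.
Proof.
move=> dx0 dy0; have m0 : 0 < Num.min (delta G x) (delta G y) by rewrite lt_min dx0.
rewrite /jG ler_ln ?posrE ?ltr_wpDr ?divr_ge0 ?enorm_ge0 ?delta_ge0 ?(ltW m0) // lerD2l.
by apply: ler_wpM2l; rewrite ?enorm_ge0 // lef_pV2 ?posrE // ge_min lexx.
Qed.

End DistanceToBoundary.

Section Segment.
Variables (R : realType) (n : nat).
Implicit Types y z : 'rV[R]_n.

Definition segment y z (s : R) : 'rV[R]_n := y + s *: (z - y).

Lemma segment0 y z : segment y z 0 = y.
Proof. by rewrite /segment scale0r addr0. Qed.

Lemma segment1 y z : segment y z 1 = z.
Proof. by rewrite /segment scale1r addrC subrK. Qed.

Lemma segmentB y z a b : segment y z b - segment y z a = (b - a) *: (z - y).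
Proof. by rewrite /segment opprD addrACA subrr add0r scalerBl. Qed.

Lemma segmentBl y z s : segment y z s - y = s *: (z - y).
Proof. by rewrite /segment addrC addKr. Qed.

Lemma enorm_segmentB y z a b :
  enorm (segment y z b - segment y z a) = `|b - a| * enorm (z - y).
Proof. by rewrite segmentB enormZ. Qed.

Lemma continuous_segment y z : continuous (segment y z).
Proof.
have -> : segment y z = (fun=> y) \+ (fun s => s *: (z - y)) by [].
move=> s; apply: continuousD; first exact: cvg_cst.
by apply: continuousZr_tmp; exact: cvg_id.
Qed.

Lemma nbhs_segment y z s0 (B : set 'rV[R]_n) : nbhs (segment y z s0) B ->
  exists2 d, 0 < d & forall t, `|t - s0| < d -> B (segment y z t).
Proof.
move=> /nbhs_ballP [e e0 eB]; have k0 : 0 < enorm (z - y) + 1 by rewrite ltr_wpDl ?enorm_ge0.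
exists (e / (enorm (z - y) + 1)) => [|t]; first by rewrite divr_gt0.
rewrite ltr_pdivlMr // => ts0; apply: eB; rewrite -ball_normE /= distrC.
apply: le_lt_trans (mx_norm_le_enorm _) (le_lt_trans _ ts0).
by rewrite enorm_segmentB ler_wpM2l // lerDl.
Qed.

Variable G : set 'rV[R]_n.

Lemma closure_segment y z s0 : 0 < s0 ->
  (forall t, 0 <= t < s0 -> G (segment y z t)) -> closure G (segment y z s0).
Proof.
move=> s0_gt0 sG B /nbhs_segment [d d0 dB].
have m0 : 0 < Num.min d s0 by rewrite lt_min d0.
have md : Num.min d s0 <= d by rewrite ge_min lexx.
have ms0 : Num.min d s0 <= s0 by rewrite ge_min lexx orbT.
exists (segment y z (s0 - Num.min d s0 / 2)); split.
  by apply: sG; apply/andP; split; lra.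
by apply: dB; rewrite addrAC subrr add0r normrN ger0_norm; lra.
Qed.

Lemma segment_meets_bdry y z : open G -> G y -> ~ G z ->
  exists2 s, 0 <= s <= 1 & bdry G (segment y z s).
Proof.
move=> oG Gy nGz; pose A := [set s : R | 0 <= s <= 1 /\ ~ G (segment y z s)].
have A1 : A 1 by split; [rewrite ler01 lexx|rewrite segment1].
have lbA : has_lbound A by exists 0 => s [/andP[]].
have infA : has_inf A by split => //; exists 1.
have s0_ge0 : 0 <= inf A by apply: lb_le_inf; [exists 1|move=> s [/andP[]]].
have s0_le1 : inf A <= 1 by apply: ge_inf.
have nGs0 : ~ G (segment y z (inf A)).
  move=> Gs0; have /nbhs_segment [d d0 dG] : nbhs (segment y z (inf A)) G.
    by move: oG; rewrite openE => /(_ _ Gs0).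
  have [t At tA] := inf_adherent d0 infA.
  have s0t := ge_inf lbA At; case: At => _; apply; apply: dG.
  by rewrite ger0_norm ?subr_ge0 //; lra.
exists (inf A); first by rewrite s0_ge0 s0_le1.
split; last by move/interior_subset.
apply: closure_segment => [|t /andP[t0 ts0]].
  by rewrite lt_neqAle s0_ge0 andbT; apply: contra_notN nGs0 => /eqP <-; rewrite segment0.
apply/not_notP => nGt; have := ge_inf lbA (conj _ nGt); rewrite t0 /=; lra.
Qed.

Lemma delta_ball_sub y z : open G -> G y -> enorm (z - y) < delta G y -> G z.
Proof.
move=> oG Gy zy; apply/not_notP => nGz.
have [s /andP[s0 s1] Gs] := segment_meets_bdry oG Gy nGz.
have := delta_le_dist y Gs; rewrite enorm_distC segmentBl enormZ ger0_norm //.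
have := enorm_ge0 (z - y); nra.
Qed.

End Segment.

Section PathLength.
Variables (R : realType) (n : nat).
Implicit Types (g : R -> 'rV[R]_n) (y z : 'rV[R]_n) (a b c : R) (t : nat -> R).

Lemma partition_mono a b m t : Defs.partition a b m t ->
  forall i j, (i <= j <= m)%N -> t i <= t j.
Proof.
move=> [_ [_ tS]] i; elim=> [|j IH] /andP[ij jm]; first by have -> : i = 0%N by lia.
have [->|ij'] := eqVneq i j.+1; first exact: lexx.
by apply: le_trans (IH _) (tS _ _); lia.
Qed.

Lemma partition_mem a b m t : Defs.partition a b m t ->
  forall i, (i <= m)%N -> a <= t i <= b.
Proof.
move=> tp i im; have [t0 [tm _]] := tp.
by rewrite -{1}t0 -tm !(partition_mono tp) ?leq0n ?im ?leqnn.
Qed.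

Lemma partition_step a b m t : Defs.partition a b m t ->
  forall i : 'I_m, a <= t i <= b /\ t i <= t i.+1.
Proof.
by move=> tp i; split; [exact: (partition_mem tp) (ltnW (ltn_ord i))|case: tp => _ [_]; apply].
Qed.

Lemma sum_partition_steps a b m t : Defs.partition a b m t ->
  \sum_(i < m) (t i.+1 - t i) = b - a.
Proof.
by move=> [<- [<- _]]; rewrite -(big_mkord xpredT (fun i => t i.+1 - t i)) telescope_sumr.
Qed.

Lemma chord_sums_ge0 g a b r : chord_sums g a b r -> 0 <= r.
Proof. by move=> [m [t [_ ->]]]; apply: sumr_ge0 => i _; exact: enorm_ge0. Qed.

Lemma plen_ge0 g a b : 0 <= plen g a b.
Proof. exact/sup_ge0/chord_sums_ge0. Qed.

Lemma chord_sums1 g a b : a <= b -> chord_sums g a b (enorm (g b - g a)).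
Proof.
move=> ab; exists 1%N, (fun i => if i == 0%N then a else b); rewrite big_ord1.
by split=> //; split=> //; split=> // i; rewrite ltnS leqn0 => /eqP ->.
Qed.

Lemma chord_sums_cat g a b c P Q :
  chord_sums g a b P -> chord_sums g b c Q -> chord_sums g a c (P + Q).
Proof.
move=> [m1 [t1 [[t10 [t1m t1S]] ->]]] [m2 [t2 [[t20 [t2m t2S]] ->]]].
pose t i := if (i <= m1)%N then t1 i else t2 (i - m1)%N.
have tl k : (k <= m1)%N -> t k = t1 k by rewrite /t => ->.
have tr k : (m1 <= k)%N -> t k = t2 (k - m1)%N.
  rewrite /t; case: ifP => // ? ?; have -> : k = m1 by lia.
  by rewrite subnn t1m t20.
exists (m1 + m2)%N, t; split; last first.
  rewrite big_split_ord /=; congr (_ + _); apply: eq_bigr => -[i /= ?] _.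
    by rewrite !tl //; lia.
  by rewrite !tr -?addnS ?addKn //; lia.
split; first by rewrite tl.
split; first by rewrite tr ?addKn ?leq_addr.
move=> i im; case: (ltnP i m1) => [i1|i1]; first by rewrite !tl //; [exact: t1S|lia].
by rewrite !tr ?subSn //; [apply: t2S|]; lia.
Qed.

Lemma rectifiable_subl g a b c : b <= c ->
  has_ubound (chord_sums g a c) -> has_ubound (chord_sums g a b).
Proof.
move=> bc [M M_ub]; exists M => P gP.
apply: le_trans (M_ub _ (chord_sums_cat gP (chord_sums1 g bc))).
by rewrite lerDl enorm_ge0.
Qed.

Lemma plen_add g a b c : a <= b -> b <= c -> has_ubound (chord_sums g a c) ->
  plen g a b + plen g b c <= plen g a c.
Proof.
move=> ab bc ac_ub; rewrite -lerBrDr; apply: ge_sup => [|P Pab].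
  by exists (enorm (g b - g a)); exact: chord_sums1.
rewrite lerBrDr addrC -lerBrDr; apply: ge_sup => [|Q Qbc].
  by exists (enorm (g c - g b)); exact: chord_sums1.
by rewrite lerBrDr addrC; apply: (ub_le_sup ac_ub); exact: chord_sums_cat Pab Qbc.
Qed.

Lemma plen_sum g a b m t : Defs.partition a b m t -> has_ubound (chord_sums g a b) ->
  \sum_(i < m) plen g (t i) (t i.+1) <= plen g a b.
Proof.
move=> [<- [<- tS]]; elim: m tS => [|m IH] tS ab_ub; first by rewrite big_ord0 plen_ge0.
have tm : t 0%N <= t m by apply: (@partition_mono (t 0%N) (t m.+1) m.+1) => //; lia.
rewrite big_ord_recr /=; apply: le_trans (plen_add tm (tS _ _) ab_ub); last exact: ltnSn.
apply: lerD => //; apply: IH => [i im|]; first by apply: tS; lia.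
exact: rectifiable_subl (tS _ (ltnSn m)) ab_ub.
Qed.

Lemma dist_le_plen g a b s : a <= s <= b -> has_ubound (chord_sums g a b) ->
  enorm (g s - g a) <= plen g a b.
Proof.
move=> /andP[a_s sb] ab_ub.
have := ub_le_sup ab_ub (chord_sums_cat (chord_sums1 g a_s) (chord_sums1 g sb)).
by apply: le_trans; rewrite lerDl enorm_ge0.
Qed.

Lemma chord_sums_segment y z a b r :
  chord_sums (segment y z) a b r -> r = (b - a) * enorm (z - y).
Proof.
move=> [m [t [tp ->]]]; rewrite -(sum_partition_steps tp) mulr_suml.
apply: eq_bigr => i _; have [_ tS] := partition_step tp i.
by rewrite enorm_segmentB ger0_norm // subr_ge0.
Qed.

Lemma plen_segment_le y z a b : a <= b -> plen (segment y z) a b <= (b - a) * enorm (z - y).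
Proof.
move=> ab; apply: ge_sup => [|_ /chord_sums_segment -> //].
by eexists; exact: chord_sums1.
Qed.

Lemma rectifiable_segment y z : rectifiable (segment y z).
Proof. by exists ((1 - 0) * enorm (z - y)) => _ /chord_sums_segment ->. Qed.

End PathLength.

Section QuasihyperbolicLength.
Variables (R : realType) (n : nat) (G : set 'rV[R]_n).
Implicit Types (g : R -> 'rV[R]_n) (x y z : 'rV[R]_n) (a b : R) (t : nat -> R).

Definition inf_inv_delta g a b :=
  inf [set (delta G (g s))^-1 | s in [set s | a <= s <= b]].

Definition darboux_sum g m t :=
  \sum_(i < m) inf_inv_delta g (t i) (t i.+1) * plen g (t i) (t i.+1).

Definition darboux_sums g :=
  [set r | exists m t, Defs.partition 0 1 m t /\ r = darboux_sum g m t].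

Lemma inf_inv_delta_ge0 g a b : 0 <= inf_inv_delta g a b.
Proof. by apply: inf_ge0 => _ [s _ <-]; rewrite invr_ge0 delta_ge0. Qed.

Lemma inf_inv_delta_le g a b s : a <= s <= b -> inf_inv_delta g a b <= (delta G (g s))^-1.
Proof.
move=> abs; apply: inf_le_ge0 => [_ [u _ <-]|]; last by exists s.
by rewrite invr_ge0 delta_ge0.
Qed.

Lemma inf_inv_delta_ge g a b c : a <= b ->
  (forall s, a <= s <= b -> c <= (delta G (g s))^-1) -> c <= inf_inv_delta g a b.
Proof.
move=> ab c_lb; apply: lb_le_inf => [|_ [s abs <-]]; last exact: c_lb.
by exists (delta G (g a))^-1, a; rewrite //= lexx ab.
Qed.

Lemma darboux_sum_ge0 g m t : 0 <= darboux_sum g m t.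
Proof.
by apply: sumr_ge0 => i _; rewrite mulr_ge0 ?inf_inv_delta_ge0 ?plen_ge0.
Qed.

Lemma qhlen_ge0 g : 0 <= qhlen G g.
Proof. by apply: sup_ge0 => _ [m [t [_ ->]]]; exact: darboux_sum_ge0. Qed.

Definition trivial_partition : nat -> R := fun i => if i == 0%N then 0 else 1.

Lemma partition_trivial : Defs.partition 0 1 1 trivial_partition.
Proof. by split=> //; split=> // i; rewrite ltnS leqn0 => /eqP ->; rewrite ler01. Qed.

Lemma darboux_sums_trivial g : darboux_sums g (inf_inv_delta g 0 1 * plen g 0 1).
Proof.
exists 1%N, trivial_partition; split; first exact: partition_trivial.
by rewrite /darboux_sum big_ord1.
Qed.

Lemma kG_le_qhlen x y g : path_in G x y g -> rectifiable g -> kG G x y <= qhlen G g.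
Proof.
move=> gxy g_rect; apply: inf_le_ge0 => [_ [h [_ [_ ->]]]|]; first exact: qhlen_ge0.
by exists g.
Qed.

Lemma qhlen_le_kG x y c : (exists g, path_in G x y g /\ rectifiable g) ->
  (forall g, path_in G x y g -> rectifiable g -> c <= qhlen G g) -> c <= kG G x y.
Proof.
move=> [g0 [g0xy g0_rect]] c_lb; apply: lb_le_inf; first by exists (qhlen G g0), g0.
by move=> _ [g [gxy [g_rect ->]]]; exact: c_lb.
Qed.

(* Here [delta] vanishes identically, hence so does every Darboux sum. *)
Lemma kG_bdry0 x y : bdry G = set0 -> kG G x y <= 0.
Proof.
move=> B0; have qh0 g : qhlen G g <= 0.
  apply: ge_sup => [|_ [m [t [tp ->]]]]; first by eexists; exact: darboux_sums_trivial.
  apply: sumr_le0 => i _; apply: mulr_le0_ge0 (plen_ge0 _ _ _).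
  have [ti tS] := partition_step tp i.
  have := @inf_inv_delta_le g (t i) (t i.+1) (t i); rewrite lexx tS delta_bdry0 // invr0; exact.
rewrite /kG; have [[r [g [gxy [g_rect _]]]]|/nonemptyPn ->] :=
  pselect ([set r | exists g, path_in G x y g /\ rectifiable g /\ r = qhlen G g] !=set0).
  exact: le_trans (kG_le_qhlen gxy g_rect) (qh0 g).
by rewrite inf0.
Qed.

Lemma darboux_sums_bounded x y g : open G -> bdry G !=set0 ->
  path_in G x y g -> rectifiable g -> has_ubound (darboux_sums g).
Proof.
move=> oG B0 [gc [gG _]] g_rect.
have dgc : {within `[0, 1], continuous (delta G \o g)}.
  by apply: within_continuous_comp; [move=> *; exact: delta_continuous|rewrite set_itvcc].
have [c c01 c_min] := EVT_min ler01 dgc; rewrite in_itv /= in c01.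
have dc0 : 0 < delta G (g c) by apply: delta_gt0 => //; exact: gG.
exists ((delta G (g c))^-1 * plen g 0 1) => _ [m [t [tp ->]]].
apply: (@le_trans _ _ (\sum_(i < m) (delta G (g c))^-1 * plen g (t i) (t i.+1))).
  apply: ler_sum => i _; apply: ler_wpM2r; first exact: plen_ge0.
  have [ti tS] := partition_step tp i.
  apply: le_trans (@inf_inv_delta_le g (t i) (t i.+1) (t i) _) _; first by rewrite lexx tS.
  have Gti := gG _ ti.
  by rewrite lef_pV2 ?posrE ?dc0 ?delta_gt0 //; apply: c_min; rewrite in_itv.
rewrite -mulr_sumr; apply: ler_wpM2l; first by rewrite invr_ge0 delta_ge0.
exact: plen_sum tp g_rect.
Qed.

(* Along [g] the distance to the boundary grows by at most the length travelled. *)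
Lemma qhlen_ge_dist_ratio x y g : open G -> bdry G !=set0 ->
  path_in G x y g -> rectifiable g ->
  enorm (y - x) / (delta G x + enorm (y - x)) <= qhlen G g.
Proof.
move=> oG B0 gxy g_rect; have [_ [gG [g0 g1]]] := gxy; set L := plen g 0 1.
have dx0 : 0 < delta G x by rewrite -g0 delta_gt0 //; apply: gG; rewrite lexx ler01.
have yxL : enorm (y - x) <= L by rewrite -g0 -g1 dist_le_plen // lexx ler01.
have dgL : (delta G x + L)^-1 <= inf_inv_delta g 0 1.
  apply: inf_inv_delta_ge => [|s s01]; first exact: ler01.
  rewrite lef_pV2 ?posrE ?delta_gt0 ?ltr_wpDr ?plen_ge0 //; last exact: gG.
  by apply: le_trans (delta_lipschitz G _ x) _; rewrite lerD2l -g0 dist_le_plen.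
apply: le_trans (ub_le_sup (darboux_sums_bounded oG B0 gxy g_rect) (darboux_sums_trivial g)).
apply: le_trans (ler_wpM2r (plen_ge0 g 0 1) dgL); rewrite [leRHS]mulrC -/L.
have l0 := enorm_ge0 (y - x); have L0 := plen_ge0 g 0 1.
rewrite ler_pdivrMr ?ltr_wpDr // mulrAC ler_pdivlMr ?ltr_wpDr //; nra.
Qed.

Lemma kG_ge_dist_ratio x y : open G -> bdry G !=set0 ->
  (exists g, path_in G x y g /\ rectifiable g) ->
  enorm (y - x) / (delta G x + enorm (y - x)) <= kG G x y.
Proof. by move=> oG B0 xy_path; apply: qhlen_le_kG => // g; exact: qhlen_ge_dist_ratio. Qed.

Lemma path_in_segment y z : open G -> G y -> enorm (z - y) < delta G y ->
  path_in G y z (segment y z).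
Proof.
move=> oG Gy zy; split; first by apply: continuous_subspaceT => s; exact: continuous_segment.
split; last by rewrite segment0 segment1.
move=> s /andP[s0 s1]; apply: delta_ball_sub oG Gy _.
rewrite segmentBl enormZ ger0_norm //; apply: le_lt_trans zy.
by rewrite ler_piMl ?enorm_ge0.
Qed.

Lemma kG_le_segment y z : open G -> G y -> bdry G !=set0 ->
  enorm (z - y) <= delta G y / 2 -> kG G y z <= 2 * enorm (z - y) / delta G y.
Proof.
move=> oG Gy B0 zy; have dy0 : 0 < delta G y by exact: delta_gt0.
have zy0 := enorm_ge0 (z - y).
have zy' : enorm (z - y) < delta G y by lra.
apply: le_trans (kG_le_qhlen (path_in_segment oG Gy zy') (rectifiable_segment y z)) _.
apply: ge_sup => [|_ [m [t [tp ->]]]]; first by eexists; exact: darboux_sums_trivial.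
apply: (@le_trans _ _ (\sum_(i < m) 2 / delta G y * ((t i.+1 - t i) * enorm (z - y)))).
  apply: ler_sum => i _; have [/andP[ti0 ti1] tS] := partition_step tp i.
  apply: ler_pM; rewrite ?inf_inv_delta_ge0 ?plen_ge0 ?plen_segment_le //.
  apply: le_trans (@inf_inv_delta_le _ _ _ (t i) _) _; first by rewrite lexx tS.
  have : enorm (segment y z (t i) - y) <= delta G y / 2.
    by rewrite segmentBl enormZ ger0_norm //; apply: le_trans zy; rewrite ler_piMl.
  have := delta_lipschitz G y (segment y z (t i)); rewrite enorm_distC => d_lip ys.
  by rewrite -invf_div lef_pV2 ?posrE ?divr_gt0 //; lra.
by rewrite -mulr_sumr -mulr_suml (sum_partition_steps tp) subr0 mul1r mulrAC.
Qed.

Lemma kG_refl_le0 y : open G -> G y -> bdry G !=set0 -> kG G y y <= 0.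
Proof.
move=> oG Gy B0; have dy0 : 0 < delta G y by exact: delta_gt0.
have := @kG_le_segment y y oG Gy B0; rewrite subrr enorm0 mulr0 mul0r; apply.
by rewrite divr_ge0 // ltW.
Qed.

End QuasihyperbolicLength.

Lemma within_continuous_comp_sub (T U V : topologicalType) (A : set T) (B : set U)
    (f : U -> V) (g : T -> U) :
  {within A, continuous g} -> g @` A `<=` B -> {within B, continuous f} ->
  {within A, continuous (f \o g)}.
Proof.
move=> /subspace_continuousP gc gAB /subspace_continuousP fc.
apply/subspace_continuousP => x Ax.
have gx := gc x Ax; have fgx := fc _ (gAB _ (imageP _ Ax)).
rewrite /from_subspace /= in gx fgx *.
apply: cvg_comp fgx => P BP.
have BgP : nbhs x (fun y => A y -> B (g y) -> P (g y)) := gx _ BP.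
change (nbhs x (fun y => A y -> P (g y))).
by apply: filterS BgP => y BgPy Ay; apply: BgPy Ay (gAB _ (imageP _ Ay)).
Qed.

Section Gauge.
Variable R : realType.
Implicit Types (f eta : R -> R) (u v : R).

Lemma homeo0_le f u v : homeo0 f -> 0 <= u -> u <= v -> f u <= f v.
Proof.
move=> [_ [f_incr _]] u0; rewrite le_eqVlt => /predU1P[->//|uv].
exact/ltW/f_incr.
Qed.

Lemma homeo0_ge0 f u : homeo0 f -> 0 <= u -> 0 <= f u.
Proof. by move=> f_homeo u0; have [f0 _] := f_homeo; rewrite -f0 homeo0_le. Qed.

Definition ln_ratio_gauge eta u := eta (ln (1 + u) / ln (3 / 2)).

Lemma ln3half_gt0 : 0 < ln (3 / 2 : R).
Proof. by apply: ln_gt0; rewrite ltr_pdivlMr // mul1r ltr_nat. Qed.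

Lemma ln_ratio_ge0 u : 0 <= u -> 0 <= ln (1 + u) / ln (3 / 2 : R).
Proof. by move=> u0; rewrite divr_ge0 ?ln_ge0 ?lerDl // ler_pdivlMr // mul1r ler_nat. Qed.

Lemma homeo0_ln_ratio_gauge eta : homeo0 eta -> homeo0 (ln_ratio_gauge eta).
Proof.
move=> eta_homeo; have c0 := ln3half_gt0; have [eta0 [eta_incr [eta_cont eta_onto]]] := eta_homeo.
have h_cont : {within [set u | 0 <= u], continuous (fun u => ln (1 + u) / ln (3 / 2 : R))}.
  apply: continuous_in_subspaceT => u /[!inE] u0.
  apply: (@continuousM _ _ (@ln R \o (fun r => 1 + r)) (fun=> (ln (3 / 2))^-1));
    last exact: cvg_cst.
  apply: continuous_comp; first by apply: continuousD; [exact: cvg_cst|exact: cvg_id].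
  by apply: continuous_ln; rewrite ltr_wpDr.
split; first by rewrite /ln_ratio_gauge addr0 ln1 mul0r.
split.
  move=> u v u0 uv; apply: eta_incr; first exact: ln_ratio_ge0.
  by rewrite ltr_pM2r ?invr_gt0 // ltr_ln ?posrE ?ltrD2l // ltr_wpDr // (le_trans u0 (ltW uv)).
split.
  apply: within_continuous_comp_sub h_cont _ eta_cont.
  by move=> _ [u /= u0 <-]; exact: ln_ratio_ge0.
move=> w w0; have [s s0 <-] := eta_onto w w0.
exists (expR (s * ln (3 / 2)) - 1).
  by rewrite subr_ge0; apply: le_trans (expR_ge1Dx _); rewrite lerDl mulr_ge0 // ltW.
by rewrite /ln_ratio_gauge addrC subrK expRK mulfK ?gt_eqF.
Qed.

Lemma homeo0_ratio_bound eta k1 k2 j1 j2 c : homeo0 eta ->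
  0 < k2 <= 1 -> 0 < c <= j2 -> 0 <= j1 ->
  k1 / k2 <= eta (j1 / j2) -> k1 <= eta (j1 / c).
Proof.
move=> eta_homeo /andP[k2_gt0 k2_le1] /andP[c0 cj2] j1_ge0.
have ej_ge0 : 0 <= eta (j1 / c) by apply: homeo0_ge0; rewrite // divr_ge0 // ltW.
have ej_le : eta (j1 / j2) <= eta (j1 / c).
  apply: homeo0_le; rewrite // ?divr_ge0 // ?(le_trans (ltW c0)) //.
  by apply: ler_wpM2l => //; rewrite lef_pV2 ?posrE ?(lt_le_trans c0).
rewrite ler_pdivrMr // => k12; apply: le_trans k12 (le_trans (ler_wpM2r (ltW k2_gt0) ej_le) _).
by rewrite -[leRHS]mulr1 ler_wpM2l.
Qed.

End Gauge.

Section HalfDeltaPoint.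
Variables (R : realType) (n : nat) (G : set 'rV[R]_n) (y z : 'rV[R]_n).
Hypotheses (oG : open G) (Gy : G y) (B0 : bdry G !=set0).
Hypothesis zy : enorm (z - y) = delta G y / 2.

Let dy0 : 0 < delta G y. Proof. exact: delta_gt0. Qed.

Lemma half_delta_point_in : G z.
Proof. by apply: delta_ball_sub oG Gy _; rewrite zy; have := dy0; lra. Qed.

Lemma half_delta_point_neq : y <> z.
Proof. by move=> yz; move: zy; rewrite -yz subrr enorm0; have := dy0; lra. Qed.

Lemma kG_half_delta_point_le1 : kG G y z <= 1.
Proof.
apply: le_trans (kG_le_segment oG Gy B0 _) _; rewrite zy ?lexx //.
by rewrite (_ : _ / _ = 1) //; field; rewrite gt_eqF ?dy0.
Qed.

Lemma kG_half_delta_point_gt0 : 0 < kG G y z.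
Proof.
apply: lt_le_trans (kG_ge_dist_ratio oG B0 _).
  by rewrite zy; apply: divr_gt0; have := dy0; lra.
exists (segment y z); split; last exact: rectifiable_segment.
by apply: path_in_segment oG Gy _; rewrite zy; have := dy0; lra.
Qed.

Lemma jG_half_delta_point_ge : ln (3 / 2) <= jG G y z.
Proof.
apply: le_trans (ln_ratio_le_jG dy0 (delta_gt0 oG half_delta_point_in B0)).
by rewrite enorm_distC zy mulrAC divff ?gt_eqF // mul1r (_ : 3 / 2 = 1 + 2^-1 :> R) //; field.
Qed.

End HalfDeltaPoint.

Lemma exists_half_delta_point (R : realType) (n : nat) (G : set 'rV[R]_n) y :
  open G -> G y -> bdry G !=set0 -> exists z, enorm (z - y) = delta G y / 2.
Proof.
move=> oG Gy [b Gb]; have dy0 : 0 < delta G y by apply: delta_gt0 => //; exists b.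
apply: (@exists_enorm_dist _ _ (y - b)); last by rewrite divr_ge0 // ltW.
exact: lt_le_trans dy0 (delta_le_dist y Gb).
Qed.

Theorem proposition2p4 (R : realType) (eta : R -> R) :
  homeo0 eta ->
  exists phi : R -> R, homeo0 phi /\
    forall (n : nat) (G : set 'rV[R]_n),
      domain G -> G <> setT ->
      quasisymmetric G (jG G) (kG G) id eta ->
      phi_uniform G phi.
Proof.
move=> eta_homeo; exists (ln_ratio_gauge eta); split; first exact: homeo0_ln_ratio_gauge.
move=> n G [oG _] _ eta_qs x y Gx Gy.
have gauge_ge0 : 0 <= ln_ratio_gauge eta (enorm (x - y) / Num.min (delta G x) (delta G y)).
  apply: homeo0_ge0 (homeo0_ln_ratio_gauge eta_homeo) _.
  by rewrite divr_ge0 ?enorm_ge0 // le_min !delta_ge0.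
have [B0|/nonemptyPn B0] := pselect (bdry G !=set0); last first.
  exact: le_trans (kG_bdry0 _ _ B0) gauge_ge0.
have [xy_eq|xy] := eqVneq x y.
  by rewrite xy_eq in gauge_ge0 *; exact: le_trans (kG_refl_le0 oG Gy B0) gauge_ge0.
have [z zy] := exists_half_delta_point oG Gy B0.
apply: (@homeo0_ratio_bound _ _ _ (kG G y z) _ (jG G y z) (ln (3 / 2)) eta_homeo).
- by rewrite (kG_half_delta_point_gt0 oG Gy B0 zy) (kG_half_delta_point_le1 oG Gy B0 zy).
- by rewrite ln3half_gt0 (jG_half_delta_point_ge oG Gy B0 zy).
- exact: jG_ge0.
apply: eta_qs => //; [exact: half_delta_point_in zy|exact/eqP|exact: half_delta_point_neq zy].
Qed.
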